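(* The consequence relation $ss \cap tt$ has a unique truth-functional binary connective $\to$ satisfying the single-conclusion version of the conclusion-Gentzen regularity rule (i.e.\ the deduction theorem): for all sets of formulae $\Gamma$ and formulae $A,B$, $\Gamma \vdash A \to B$ iff $\Gamma, A\vdash B$. It is the connective whose truth-function is given by $x \to y = 1$ if $x \leq y$, and $x \to y = y$ otherwise; that is, $1\to 1 = 1$, $1\to \tfrac{1}{2} = \tfrac{1}{2}$, $1 \to 0 = 0$, $\tfrac{1}{2}\to 1 = 1$, $\tfrac{1}{2}\to\tfrac{1}{2} = 1$, $\tfrac{1}{2}\to 0 = 0$, and $0 \to y = 1$ for every $y$ (a three-valued Gödel implication). However, $ss \cap tt$ has no truth-functional connective $\to$ satisfying the single-conclusion version of the premise-Gentzen regularity rule: for all $\Gamma, A, B$, $\Gamma, A\to B\vdash$ (empty conclusion) iff ($\Gamma, B \vdash$ and $\Gamma \vdash A$). The Gödel conditional just defined does, however, satisfy the right-to-left direction of that premise rule: if $\Gamma, B \vdash$ and $\Gamma \vdash A$, then $\Gamma, A\to B\vdash$.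
   Context: Three-valued truth-functional semantics with truth values $\{0, \tfrac{1}{2}, 1\}$ ordered $0 < \tfrac{1}{2} < 1$, over a sentential language whose semantics is constant expressive (for each truth value there is a formula taking that value under every valuation), and where consequence relates sets of premises to sets of conclusions (possibly empty). The relation $ss \cap tt$ is the intersection of the pure consequence relation $ss$ (preservation of the value $1$: whenever all premises take value $1$, some conclusion takes value $1$) and the pure consequence relation $tt$ (preservation of non-zero values: whenever all premises take a value in $\{1,\tfrac{1}{2}\}$, some conclusion does). Equivalently, $\Gamma \vdash \Delta$ iff for every valuation $v$: some premise value is $\leq$ some conclusion value, or some premise has value $0$, or some conclusion has value $1$. *)

(** Truth values 0, 1/2, 1 with order 0 < 1/2 < 1. *)
Inductive tv : Type := tv0 | tvh | tv1.

Definition rank (x : tv) : nat :=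
  match x with tv0 => 0 | tvh => 1 | tv1 => 2 end.

Definition tv_le (x y : tv) : Prop := rank x <= rank y.

Definition tv_leb (x y : tv) : bool := Nat.leb (rank x) (rank y).

Definition godel (x y : tv) : tv := if tv_leb x y then tv1 else y.

Definition fset (Form : Type) := Form -> Prop.
Definition emptyF {Form : Type} : fset Form := fun _ => False.
Definition single {Form : Type} (A : Form) : fset Form := fun C => C = A.
Definition addF {Form : Type} (G : fset Form) (A : Form) : fset Form :=
  fun C => G C \/ C = A.

Definition ss {Form : Type} (Val : (Form -> tv) -> Prop)
  (G D : fset Form) : Prop :=
  forall v, Val v -> (forall g, G g -> v g = tv1) -> exists d, D d /\ v d = tv1.

Definition tt {Form : Type} (Val : (Form -> tv) -> Prop)
  (G D : fset Form) : Prop :=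
  forall v, Val v -> (forall g, G g -> v g <> tv0) -> exists d, D d /\ v d <> tv0.

Definition sstt {Form : Type} (Val : (Form -> tv) -> Prop)
  (G D : fset Form) : Prop := ss Val G D /\ tt Val G D.

(** A semantics over formulae Form is given by its (nonempty) set of
    valuations Val; it is constant expressive if every truth value is
    taken by some formula under every valuation. *)
Definition constant_expressive {Form : Type} (Val : (Form -> tv) -> Prop) : Prop :=
  forall t : tv, exists c : Form, forall v, Val v -> v c = t.

Definition truth_functional {Form : Type} (Val : (Form -> tv) -> Prop)
  (imp : Form -> Form -> Form) (f : tv -> tv -> tv) : Prop :=
  forall v, Val v -> forall A B, v (imp A B) = f (v A) (v B).

Definition deduction_rule {Form : Type} (Val : (Form -> tv) -> Prop)
  (imp : Form -> Form -> Form) : Prop :=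
  forall (G : fset Form) (A B : Form),
    sstt Val G (single (imp A B)) <-> sstt Val (addF G A) (single B).

Definition premise_rule {Form : Type} (Val : (Form -> tv) -> Prop)
  (imp : Form -> Form -> Form) : Prop :=
  forall (G : fset Form) (A B : Form),
    sstt Val (addF G (imp A B)) emptyF <->
    (sstt Val (addF G B) emptyF /\ sstt Val G (single A)).

Definition premise_rule_rl {Form : Type} (Val : (Form -> tv) -> Prop)
  (imp : Form -> Form -> Form) : Prop :=
  forall (G : fset Form) (A B : Form),
    (sstt Val (addF G B) emptyF /\ sstt Val G (single A)) ->
    sstt Val (addF G (imp A B)) emptyF.

From Stdlib Require Import Setoid Lia.

(* Both ss and tt are checked valuation by valuation, so Γ ⊢ B holds in ss ∩ tt
   iff at every valuation: if all of Γ is 1 then B is 1, and if all of Γ is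
   non-zero then B is non-zero.  For the Gödel conditional this local condition
   for Γ ⊢ A → B coincides with the one for Γ, A ⊢ B, which gives the deduction
   theorem; it also yields the right-to-left premise rule.  Conversely, the
   deduction theorem instantiated with constant formulas, once with Γ = {1} and
   once with Γ = {½}, determines when x → y is 1 and when it is 0, and that pins
   down the Gödel table.  For the premise rule take A = ½ and B = 0: with
   Γ = {1} it forces ½ → 0 ≠ 0 (as {1} ⊬ ½), with Γ = {½} it forces ½ → 0 = 0. *)


Lemma tv_le_iff (x y : tv) :
  tv_le x y <-> (x = tv1 -> y = tv1) /\ (x <> tv0 -> y <> tv0).
Proof. destruct x, y; unfold tv_le; cbn; intuition (try lia; try discriminate). Qed.

Lemma godel_eq_one (x y : tv) : godel x y = tv1 <-> tv_le x y.
Proof.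
  destruct x, y; unfold godel, tv_le; cbn; intuition (try lia; try discriminate).
Qed.

Lemma godel_neq_zero (x y : tv) : godel x y <> tv0 <-> (x <> tv0 -> y <> tv0).
Proof. destruct x, y; cbn; intuition discriminate. Qed.

Lemma tv_eq (x y : tv) :
  (x = tv1 <-> y = tv1) -> (x <> tv0 <-> y <> tv0) -> x = y.
Proof. destruct x, y; intuition congruence. Qed.

Definition all_one {Form : Type} (v : Form -> tv) (G : fset Form) : Prop :=
  forall g, G g -> v g = tv1.

Definition all_nonzero {Form : Type} (v : Form -> tv) (G : fset Form) : Prop :=
  forall g, G g -> v g <> tv0.

Section Sets.
Context {Form : Type} (v : Form -> tv).

Lemma all_one_all_nonzero (G : fset Form) : all_one v G -> all_nonzero v G.
Proof. intros H g Hg; rewrite (H g Hg); discriminate. Qed.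

Lemma all_one_single (A : Form) : all_one v (single A) <-> v A = tv1.
Proof. unfold all_one, single; firstorder congruence. Qed.

Lemma all_nonzero_single (A : Form) : all_nonzero v (single A) <-> v A <> tv0.
Proof. unfold all_nonzero, single; firstorder congruence. Qed.

Lemma all_one_addF (G : fset Form) (A : Form) :
  all_one v (addF G A) <-> all_one v G /\ v A = tv1.
Proof. unfold all_one, addF; firstorder congruence. Qed.

Lemma all_nonzero_addF (G : fset Form) (A : Form) :
  all_nonzero v (addF G A) <-> all_nonzero v G /\ v A <> tv0.
Proof. unfold all_nonzero, addF; firstorder congruence. Qed.

Lemma exists_single (B : Form) (P : Form -> Prop) :
  (exists d, single B d /\ P d) <-> P B.
Proof. unfold single; firstorder congruence. Qed.

End Sets.

Section Consequence.
Context {Form : Type} {Val : (Form -> tv) -> Prop}.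

Lemma sstt_single (G : fset Form) (B : Form) :
  sstt Val G (single B) <->
  forall v, Val v -> (all_one v G -> v B = tv1) /\ (all_nonzero v G -> v B <> tv0).
Proof. unfold sstt, ss, tt; setoid_rewrite exists_single; firstorder. Qed.

Lemma sstt_empty (G : fset Form) :
  sstt Val G emptyF <-> forall v, Val v -> ~ all_nonzero v G.
Proof.
  split.
  - intros [_ Htt] v Hv HG; destruct (Htt v Hv HG) as [d [[] _]].
  - intros H; split; intros v Hv HG; exfalso; apply (H v Hv);
      [apply all_one_all_nonzero|]; exact HG.
Qed.

Lemma godel_deduction_local (v : Form -> tv) (G : fset Form) (A B : Form) :
  (all_one v G -> godel (v A) (v B) = tv1) /\
  (all_nonzero v G -> godel (v A) (v B) <> tv0) <->
  (all_one v (addF G A) -> v B = tv1) /\ (all_nonzero v (addF G A) -> v B <> tv0).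
Proof.
  rewrite all_one_addF, all_nonzero_addF, godel_eq_one, tv_le_iff, godel_neq_zero.
  pose proof (all_one_all_nonzero v G); tauto.
Qed.

Lemma deduction_rule_godel (imp : Form -> Form -> Form) :
  truth_functional Val imp godel -> deduction_rule Val imp.
Proof.
  intros Htf G A B; rewrite !sstt_single.
  split; intros H v Hv; specialize (H v Hv); rewrite Htf in * by exact Hv;
    apply godel_deduction_local; exact H.
Qed.

Lemma premise_rule_rl_godel (imp : Form -> Form -> Form) :
  truth_functional Val imp godel -> premise_rule_rl Val imp.
Proof.
  intros Htf G A B [HGB HGA]; rewrite sstt_empty in HGB |- *; rewrite sstt_single in HGA.
  intros v Hv; rewrite all_nonzero_addF, Htf, godel_neq_zero by exact Hv.
  intros [HG HAB]; apply (HGB v Hv); rewrite all_nonzero_addF.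
  split; [exact HG | exact (HAB (proj2 (HGA v Hv) HG))].
Qed.

Definition has_value (C : Form) (t : tv) : Prop := forall v, Val v -> v C = t.

Lemma has_value_imp {imp : Form -> Form -> Form} {f : tv -> tv -> tv} {A B a b} :
  truth_functional Val imp f -> has_value A a -> has_value B b ->
  has_value (imp A B) (f a b).
Proof. intros Htf HA HB v Hv; rewrite Htf, HA, HB by exact Hv; reflexivity. Qed.

Lemma constant_expressive_values :
  constant_expressive Val -> exists c : tv -> Form, forall t, has_value (c t) t.
Proof.
  intros Hce; destruct (Hce tv0) as [c0 H0], (Hce tvh) as [ch Hh], (Hce tv1) as [c1 H1].
  exists (fun t => match t with tv0 => c0 | tvh => ch | tv1 => c1 end).
  intros []; assumption.
Qed.

Hypothesis Hne : exists v, Val v.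

Lemma forall_val_iff (P : (Form -> tv) -> Prop) (Q : Prop) :
  (forall v, Val v -> (P v <-> Q)) -> ((forall v, Val v -> P v) <-> Q).
Proof. destruct Hne as [v0 Hv0]; firstorder. Qed.

Lemma sstt_single_values {C B : Form} {t b : tv} :
  has_value C t -> has_value B b ->
  (sstt Val (single C) (single B) <-> tv_le t b).
Proof.
  intros HC HB; rewrite sstt_single, tv_le_iff; apply forall_val_iff; intros v Hv.
  rewrite all_one_single, all_nonzero_single, (HC v Hv), (HB v Hv); reflexivity.
Qed.

Lemma sstt_pair_single_values {C A B : Form} {t a b : tv} :
  has_value C t -> has_value A a -> has_value B b ->
  (sstt Val (addF (single C) A) (single B) <->
   (t = tv1 /\ a = tv1 -> b = tv1) /\ (t <> tv0 /\ a <> tv0 -> b <> tv0)).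
Proof.
  intros HC HA HB; rewrite sstt_single; apply forall_val_iff; intros v Hv.
  rewrite all_one_addF, all_nonzero_addF, all_one_single, all_nonzero_single,
    (HC v Hv), (HA v Hv), (HB v Hv); reflexivity.
Qed.

Lemma sstt_pair_empty_values {C A : Form} {t a : tv} :
  has_value C t -> has_value A a ->
  (sstt Val (addF (single C) A) emptyF <-> t = tv0 \/ a = tv0).
Proof.
  intros HC HA; rewrite sstt_empty; apply forall_val_iff; intros v Hv.
  rewrite all_nonzero_addF, all_nonzero_single, (HC v Hv), (HA v Hv).
  destruct t, a; intuition congruence.
Qed.

Section Constants.
Context {c : tv -> Form} (Hc : forall t, has_value (c t) t).
Context {imp : Form -> Form -> Form} {f : tv -> tv -> tv}.
Hypothesis Htf : truth_functional Val imp f.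

Let Himp x y : has_value (imp (c x) (c y)) (f x y) := has_value_imp Htf (Hc x) (Hc y).

Lemma deduction_rule_godel_unique :
  deduction_rule Val imp -> forall x y, f x y = godel x y.
Proof.
  intros D x y.
  pose proof (D (single (c tv1)) (c x) (c y)) as Hone.
  pose proof (D (single (c tvh)) (c x) (c y)) as Hhalf.
  rewrite (sstt_single_values (Hc _) (Himp x y)),
    (sstt_pair_single_values (Hc _) (Hc _) (Hc _)), tv_le_iff in Hone.
  rewrite (sstt_single_values (Hc _) (Himp x y)),
    (sstt_pair_single_values (Hc _) (Hc _) (Hc _)), tv_le_iff in Hhalf.
  apply tv_eq; [rewrite godel_eq_one, tv_le_iff | rewrite godel_neq_zero];
    intuition congruence.
Qed.

Lemma no_premise_rule : ~ premise_rule Val imp.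
Proof.
  intros P.
  pose proof (P (single (c tv1)) (c tvh) (c tv0)) as Hone.
  pose proof (P (single (c tvh)) (c tvh) (c tv0)) as Hhalf.
  rewrite (sstt_pair_empty_values (Hc _) (Himp _ _)),
    (sstt_pair_empty_values (Hc _) (Hc _)), (sstt_single_values (Hc _) (Hc _)) in Hone.
  rewrite (sstt_pair_empty_values (Hc _) (Himp _ _)),
    (sstt_pair_empty_values (Hc _) (Hc _)), (sstt_single_values (Hc _) (Hc _)) in Hhalf.
  assert (Hzero : f tvh tv0 = tv0).
  { destruct (proj2 Hhalf) as [E | E]; [| discriminate | exact E].
    split; [now right | unfold tv_le; cbn; lia]. }
  rewrite Hzero in Hone.
  destruct (proj1 Hone (or_intror eq_refl)) as [_ Hle].
  unfold tv_le in Hle; cbn in Hle; lia.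
Qed.

End Constants.
End Consequence.

Theorem theorem4p2 (Form : Type) (Val : (Form -> tv) -> Prop)
  (Hne : exists v, Val v)
  (Hce : constant_expressive Val) :
  (* a truth-functional binary connective satisfies the deduction theorem
     iff its truth function is the three-valued Goedel conditional *)
  (forall (imp : Form -> Form -> Form) (f : tv -> tv -> tv),
      truth_functional Val imp f ->
      (deduction_rule Val imp <-> (forall x y, f x y = godel x y))) /\
  (* no truth-functional connective satisfies the premise rule *)
  (forall (imp : Form -> Form -> Form) (f : tv -> tv -> tv),
      truth_functional Val imp f -> ~ premise_rule Val imp) /\
  (* the Goedel conditional satisfies its right-to-left direction *)
  (forall (imp : Form -> Form -> Form),
      truth_functional Val imp godel -> premise_rule_rl Val imp).
Proof.
  destruct (constant_expressive_values Hce) as [c Hc].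
  split; [| split].
  - intros imp f Htf; split.
    + exact (deduction_rule_godel_unique Hne Hc Htf).
    + intros Hf; apply deduction_rule_godel.
      intros v Hv A B; rewrite (Htf v Hv); apply Hf.
  - intros imp f Htf; exact (no_premise_rule Hne Hc Htf).
  - exact premise_rule_rl_godel.
Qed.
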